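(* Let $a,a^{+}$ be boson operators with $aa^{+}-a^{+}a=1$, let $m\in\mathbb{N}$ and let $\lambda$ be a nonzero real number. For all integers $l,n\ge0$, \[ (m\,a^{+}a+1)_{l+n,\lambda}=\sum_{j=0}^{l}W_{m,\lambda}(l,j)\,m^{j}(a^{+})^{j}\,(m\,a^{+}a+1+mj-l\lambda)_{n,\lambda}\,a^{j}. \]
   Context: For an operator or number $X$ and real $\lambda\neq0$, $(X)_{0,\lambda}=1$ and $(X)_{n,\lambda}=X(X-\lambda)\cdots(X-(n-1)\lambda)$ for $n\ge1$ (scalars mean multiples of the identity). For $m\in\mathbb{N}$, the degenerate Whitney numbers of the second kind $W_{m,\lambda}(n,k)$ are defined by $(mx+1)_{n,\lambda}=\sum_{k=0}^{n}W_{m,\lambda}(n,k)m^{k}(x)_k$ for $n\ge0$, where $(x)_k=x(x-1)\cdots(x-k+1)$. *)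

From HB Require Import structures.
From mathcomp Require Import all_boot all_order all_algebra.
From mathcomp Require Import reals.
Set Implicit Arguments. Unset Strict Implicit. Unset Printing Implicit Defensive.
Import Order.TTheory GRing.Theory Num.Theory.
Local Open Scope ring_scope.

Definition dfall {R : pzRingType} {A : lalgType R} (X : A) (lam : R) (n : nat) : A :=
  \prod_(i < n) (X - (i%:R * lam)%:A).

Definition ffall {R : pzRingType} (x : R) (k : nat) : R :=
  \prod_(i < k) (x - i%:R).

From mathcomp Require Import all_boot all_order all_algebra.
From mathcomp Require Import reals.
Set Implicit Arguments.
Unset Strict Implicit.
Unset Printing Implicit Defensive.

Import GRing.Theory Num.Theory.
Local Open Scope ring_scope.

(* The expansion of (m x + 1)_{l,lam} in falling factorials (x)_j is a
   polynomial identity, so it survives substituting the number operator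
   N = a^+ a for x.  Normal ordering turns (N)_j into (a^+)^j a^j, and
   (m N + 1)_{l+n,lam} = (m N + 1 - l lam)_{n,lam} (m N + 1)_{l,lam}.  Finally
   N a^+ = a^+ (N + 1), so (a^+)^j can be pulled to the left of
   (m N + 1 - l lam)_{n,lam} at the cost of shifting its argument by m j. *)

Section DegenerateFallingFactorial.
Variables (R : pzRingType) (A : lalgType R).
Implicit Types (X : A) (lam : R).

Lemma dfall0 X lam : dfall X lam 0 = 1.
Proof. exact: big_ord0. Qed.

Lemma dfallSr X lam n :
  dfall X lam n.+1 = dfall X lam n * (X - (n%:R * lam)%:A).
Proof. exact: big_ord_recr. Qed.

Lemma dfallD X lam l n :
  dfall X lam (l + n) = dfall X lam l * dfall (X - (l%:R * lam)%:A) lam n.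
Proof.
rewrite /dfall big_split_ord /=; congr (_ * _); apply: eq_bigr => i _.
by rewrite natrD mulrDl scalerDl opprD addrA.
Qed.

End DegenerateFallingFactorial.

Section Intertwining.
Variables (R : pzRingType) (A : algType R).

Lemma dfall_intertwine (X X' b : A) (lam : R) n :
  X * b = b * X' -> dfall X lam n * b = b * dfall X' lam n.
Proof.
move=> XbX'; elim: n => [|n IHn]; first by rewrite !dfall0 mul1r mulr1.
rewrite !dfallSr -mulrA mulrBl XbX' mulr_algl -mulr_algr -mulrBr.
by rewrite mulrA IHn mulrA.
Qed.

Lemma dfall_commute (X Y : A) (lam : R) k n :
  GRing.comm X Y -> GRing.comm (dfall X lam k) (dfall Y lam n).
Proof.
move=> cXY; apply/esym/dfall_intertwine.
by apply/esym/dfall_intertwine; rewrite cXY.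
Qed.

End Intertwining.

Lemma rmorph_ffall (R S : pzRingType) (f : {rmorphism R -> S}) (x : R) k :
  f (ffall x k) = ffall (f x) k.
Proof.
by rewrite rmorph_prod; apply: eq_bigr => i _; rewrite rmorphB rmorph_nat.
Qed.

Section Evaluation.
Variable R : comNzRingType.

Lemma horner_alg_dfall (A : algType R) (N : A) (p : {poly R}) (lam : R) n :
  horner_alg N (dfall p lam n) = dfall (horner_alg N p) lam n.
Proof.
rewrite rmorph_prod; apply: eq_bigr => i _.
by rewrite rmorphB /= alg_polyC horner_algC.
Qed.

Lemma horner_dfall (p : {poly R}) (lam x : R) n :
  (dfall p lam n).[x] = @dfall R R^o p.[x] lam n.
Proof.
rewrite horner_prod; apply: eq_bigr => i _.
by rewrite hornerD hornerN alg_polyC hornerC [in RHS]/GRing.scale /= mulr1.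
Qed.

End Evaluation.

Lemma eq_poly_horner (R : numDomainType) (p q : {poly R}) :
  (forall x, p.[x] = q.[x]) -> p = q.
Proof.
move=> epq; apply/eqP; rewrite -subr_eq0; apply/eqP.
apply: (@roots_geq_poly_eq0 _ _ [seq i%:R | i <- iota 0 (size (p - q))]).
- by apply/allP => x _; rewrite /root hornerD hornerN epq subrr.
- by rewrite map_inj_uniq ?iota_uniq // => i j /eqP; rewrite eqr_nat => /eqP.
- by rewrite size_map size_iota.
Qed.

Section CanonicalCommutation.
Variables (R : pzRingType) (A : algType R) (ann cre : A).
Hypothesis ccr : ann * cre - cre * ann = 1.
Let N := cre * ann.

Lemma ccr_mul_ann_cre : ann * cre = N + 1.
Proof. by rewrite -ccr addrC subrK. Qed.

Lemma num_mul_exp_ann k : N * ann ^+ k = ann ^+ k * (N - k%:R).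
Proof.
elim: k => [|k IHk]; first by rewrite expr0 mul1r mulr1 subr0.
have Nann : N * ann = ann * (N - 1).
  by rewrite mulrBr mulr1 /N mulrA ccr_mul_ann_cre mulrDl mul1r addrK.
rewrite exprS mulrA Nann -mulrA mulrBl mul1r IHk -mulrA.
by rewrite -[X in _ - X]mulr1 -mulrBr -natr1 opprD addrA.
Qed.

Lemma normal_order_exp j : cre ^+ j * ann ^+ j = ffall N j.
Proof.
elim: j => [|j IHj]; first by rewrite !expr0 mulr1 /ffall big_ord0.
rewrite /ffall big_ord_recr /= -/(ffall _ _) -IHj -mulrA -num_mul_exp_ann.
by rewrite exprSr exprS !mulrA.
Qed.

Lemma num_mul_exp_cre j : N * cre ^+ j = cre ^+ j * (N + j%:R).
Proof.
elim: j => [|j IHj]; first by rewrite expr0 mul1r mulr1 addr0.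
rewrite exprSr mulrA IHj -!mulrA; congr (_ * _).
rewrite mulrDl -commr_nat /N -mulrA ccr_mul_ann_cre -mulrDr.
by rewrite -natr1 addrA addrAC.
Qed.

Lemma dfall_num_mul_exp_cre (m : nat) (c lam : R) j n :
  dfall (m%:R * N + c%:A) lam n * cre ^+ j
  = cre ^+ j * dfall (m%:R * N + (c + (m * j)%:R)%:A) lam n.
Proof.
apply: dfall_intertwine; rewrite mulrDl.
have -> : m%:R * N * cre ^+ j = cre ^+ j * (m%:R * N + (m * j)%:R).
  by rewrite -mulrA num_mul_exp_cre mulrA -commr_nat -mulrA mulrDr -natrM.
rewrite comm_alg -mulrDr scalerDl scaler_nat.
by rewrite -addrA [X in _ + X]addrC.
Qed.

End CanonicalCommutation.

Lemma dfall_num_expansion (R : numDomainType) (A : algType R) (N : A) (m : nat)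
    (lam : R) (W : nat -> nat -> R) l :
  (forall x : R, @dfall R R^o (m%:R * x + 1) lam l
                 = \sum_(k < l.+1) W l k * m%:R ^+ k * ffall x k) ->
  dfall (m%:R * N + 1) lam l
  = \sum_(j < l.+1) (W l j * m%:R ^+ j) *: ffall N j.
Proof.
move=> expansion.
pose Q := \sum_(j < l.+1) (W l j * m%:R ^+ j) *: ffall ('X : {poly R}) j.
have /(congr1 (horner_alg N)) : dfall (m%:R * 'X + 1) lam l = Q.
  apply: eq_poly_horner => x; rewrite horner_dfall horner_sum.
  rewrite -polyC_natr !hornerE expansion; apply: eq_bigr => j _.
  by rewrite hornerZ -(horner_evalE x) rmorph_ffall /= horner_evalE hornerX.
rewrite horner_alg_dfall rmorphD rmorphM rmorph1 rmorph_nat /= horner_algX => ->.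
rewrite rmorph_sum; apply: eq_bigr => j _.
by rewrite -mul_polyC rmorphM /= horner_algC mulr_algl rmorph_ffall /= horner_algX.
Qed.

Theorem mainTheorem6 (R : realType) (A : algType R) (a ad : A) (m : nat)
  (lam : R) (W : nat -> nat -> R) :
  lam != 0 ->
  a * ad - ad * a = 1 ->
  (forall (n : nat) (x : R),
      @dfall R R^o (m%:R * x + 1) lam n
      = \sum_(k < n.+1) W n k * m%:R ^+ k * ffall x k) ->
  forall l n : nat,
    dfall (m%:R * (ad * a) + 1) lam (l + n)
    = \sum_(j < l.+1)
        (W l j * m%:R ^+ j) *:
          (ad ^+ j
           * dfall (m%:R * (ad * a) + 1 + (m * j)%:R - (l%:R * lam)%:A) lam n
           * a ^+ j).
Proof.
(* The identity holds for every lam. *)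
move=> _ ccr expansion l n; set N := ad * a; set X := m%:R * N + 1.
have shift : X - (l%:R * lam)%:A = m%:R * N + (1 - l%:R * lam)%:A.
  by rewrite scalerBl scale1r addrA.
have shift_j j : X + (m * j)%:R - (l%:R * lam)%:A
                 = m%:R * N + (1 - l%:R * lam + (m * j)%:R)%:A.
  by rewrite scalerDl scalerBl scale1r scaler_nat !addrA addrAC.
have cX : GRing.comm X (X - (l%:R * lam)%:A).
  exact: commrB (commr_refl X) (commr_sym (comm_alg _ X)).
rewrite dfallD (dfall_commute lam l n cX) (dfall_num_expansion N (expansion l)).
rewrite mulr_sumr; apply: eq_bigr => j _; rewrite -scalerAr; congr (_ *: _).
by rewrite -normal_order_exp // mulrA shift dfall_num_mul_exp_cre // -shift_j.
Qed.
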